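(* Let $n\ge4$ and let $W_n$ be the wheel graph on $n$ vertices with Laplacian matrix \[L=\left[\begin{array}{c|c} n-1 & -\mathbf{1}^T \\ \hline -\mathbf{1} & B \end{array}\right],\] where $B$ is the circulant matrix $\mathrm{circ}(3,-1,0,\ldots,0,-1)$ of order $n-1$. Then the Moore–Penrose inverse of $L$ is \[L^+=\frac{1}{n^2}\left[\begin{array}{c|c} n-1 & -\mathbf{1}^T \\ \hline -\mathbf{1} & -J_{n-1}-nX \end{array}\right],\] where, with $C=\mathrm{circ}(1,0,\ldots,0,-1)$ of order $n-1$, $X=(CC^T+I_{n-1})^{-1}\left[J_{n-1}-nI_{n-1}\right]=\mathrm{circ}(b_0,b_1,\ldots,b_{n-2})$ with, for $j=0,\ldots,n-2$, \[b_j=1+\frac{n2^{n-1-j}}{\sqrt{5}}\left[\frac{(3+\sqrt{5})^j}{2^{n-1}-(3+\sqrt{5})^{n-1}}-\frac{(3-\sqrt{5})^j}{2^{n-1}-(3-\sqrt{5})^{n-1}}\right].\]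
   Context: The wheel graph $W_n$ ($n\ge4$) is a cycle on $n-1$ vertices together with a hub vertex adjacent to every cycle vertex; in the displayed form the hub is listed first and the cycle vertices follow in cyclic order. The Laplacian is $L=D-A$, where $A$ is the adjacency matrix and $D$ the diagonal degree matrix. For $c_0,\dots,c_{k-1}$, $\mathrm{circ}(c_0,\ldots,c_{k-1})$ denotes the $k\times k$ circulant matrix whose $(i,j)$-entry is $c_{(j-i)\bmod k}$. $\mathbf 1$ is the all-ones column vector of length $n-1$, $J_{n-1}$ the $(n-1)\times(n-1)$ all-ones matrix, $I_{n-1}$ the identity. The Moore–Penrose inverse $A^+$ of a real matrix $A$ is the unique matrix with $AA^+A=A$, $A^+AA^+=A^+$, $(AA^+)^T=AA^+$, $(A^+A)^T=A^+A$. *)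

From HB Require Import structures.
From mathcomp Require Import all_boot all_order all_algebra.
From mathcomp Require Import reals.
Set Implicit Arguments. Unset Strict Implicit. Unset Printing Implicit Defensive.
Import Order.TTheory GRing.Theory Num.Theory.
Local Open Scope ring_scope.

Definition circ (R : nzRingType) (k : nat) (c : nat -> R) : 'M[R]_k :=
  \matrix_(i < k, j < k) c ((j + k - i) %% k)%N.

Definition is_MP_inverse (R : nzRingType) (m n : nat)
    (A : 'M[R]_(m, n)) (Ap : 'M[R]_(n, m)) : Prop :=
  [/\ A *m Ap *m A = A, Ap *m A *m Ap = Ap,
      (A *m Ap)^T = A *m Ap & (Ap *m A)^T = Ap *m A].

(* Wheel graph W_n on vertex set 'I_(1 + (n-1)): vertex 0 is the hub,
   vertices 1, ..., n-1 form the cycle in this cyclic order. *)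
Definition wheel_edge (n : nat) (i j : nat) : bool :=
  if (i == 0)%N then (j != 0)%N
  else if (j == 0)%N then true
  else let d := ((j + n.-1 - i) %% n.-1)%N in (d == 1)%N || (d == (n.-1).-1)%N.

Definition wheel_adj (R : nzRingType) (n : nat) : 'M[R]_(1 + n.-1) :=
  \matrix_(i, j) (if wheel_edge n i j then 1 else 0).

Definition laplacian (R : nzRingType) (k : nat) (A : 'M[R]_k) : 'M[R]_k :=
  diag_mx (\row_i \sum_j A i j) - A.

Definition wheel_B (R : nzRingType) (n : nat) : 'M[R]_(n.-1) :=
  circ (n.-1) (fun k => if (k == 0)%N then 3
                        else if (k == 1)%N || (k == (n.-1).-1)%N then -1 else 0).

Definition wheel_C (R : nzRingType) (n : nat) : 'M[R]_(n.-1) :=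
  circ (n.-1) (fun k => if (k == 0)%N then 1 else if (k == (n.-1).-1)%N then -1 else 0).

Definition wheel_X (R : comUnitRingType) (n : nat) : 'M[R]_(n.-1) :=
  invmx (wheel_C R n *m (wheel_C R n)^T + 1%:M) *m (const_mx 1 - (n%:R) %:M).

Definition wheel_b (R : realType) (n j : nat) : R :=
  1 + n%:R * 2 ^+ (n - 1 - j) / Num.sqrt 5 *
    ((3 + Num.sqrt 5) ^+ j / (2 ^+ (n - 1) - (3 + Num.sqrt 5) ^+ (n - 1))
     - (3 - Num.sqrt 5) ^+ j / (2 ^+ (n - 1) - (3 - Num.sqrt 5) ^+ (n - 1))).

Definition wheel_Lplus (R : realType) (n : nat) : 'M[R]_(1 + n.-1) :=
  (n%:R ^+ 2)^-1 *:
    block_mx ((n.-1)%:R%:M) (- const_mx 1) (- const_mx 1)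
             (- const_mx 1 - n%:R *: wheel_X R n).

From HB Require Import structures.
From mathcomp Require Import all_boot all_order all_algebra.
From mathcomp Require Import fingroup perm reals ring lra.
Set Implicit Arguments. Unset Strict Implicit. Unset Printing Implicit Defensive.
Import Order.TTheory GRing.Theory Num.Theory.
Local Open Scope ring_scope.

(* Write P for the cyclic shift on n - 1 points; then B = C C^T + I = 3 I - P - P^T,
   and B has all row and column sums 1.  The roots phi, psi = (3 +- sqrt 5)/2 of
   x^2 - 3x + 1 give b_j = 1 + a phi^j + b psi^j with
   a (1 - phi^(n-1)) = n / sqrt 5 = - b (1 - psi^(n-1)).  For h = b - 1 the
   interior rows of B circ(b) reduce to the recurrence h_(j+1) - 3 h_j + h_(j-1) = 0,
   and the normalisation of a and b makes the two wrap-around rows produce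
   B circ(b) = J - n I, that is X = circ(b).  From B X = X B = J - n I and
   X 1 = -1, a block computation gives L L^+ = L^+ L = I - J/n, the orthogonal
   projector onto the complement of 1, which fixes both L and L^+; the four
   Penrose equations follow. *)

Lemma mul_const1_mx (R : pzSemiRingType) p q r :
  (const_mx 1 : 'M[R]_(p, q)) *m (const_mx 1 : 'M[R]_(q, r)) = q%:R *: const_mx 1.
Proof.
apply/matrixP => i j; rewrite !mxE mulr1.
by under eq_bigr do rewrite !mxE mulr1; rewrite sumr_const card_ord.
Qed.

Lemma laplacianE (R : nzRingType) m (A : 'M[R]_m) :
  laplacian A = diag_mx (A *m const_mx 1)^T - A.
Proof.
congr (diag_mx _ - A); apply/rowP => i; rewrite !mxE.
by apply: eq_bigr => j _; rewrite mxE mulr1.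
Qed.

Lemma is_MP_inverse_projector (R : nzRingType) m (A Ap P : 'M[R]_m) :
  A *m Ap = P -> Ap *m A = P -> P^T = P -> P *m A = A -> P *m Ap = Ap ->
  is_MP_inverse A Ap.
Proof. by move=> AAp ApA sym_P PA PAp; split; rewrite ?AAp ?ApA ?PA ?PAp. Qed.

Lemma eq_addr_subr (V : zmodType) (x y z : V) : (x + z == y) = (y - x == z).
Proof. by rewrite subr_eq addrC eq_sym. Qed.

Lemma eq_addr_subrN (V : zmodType) (x y z : V) : (y + z == x) = (y - x == - z).
Proof. by rewrite eq_addr_subr -eqr_oppLR opprB. Qed.

Lemma val_subZp m (i j : 'I_m.+1) : val (j - i) = ((j + m.+1 - i) %% m.+1)%N.
Proof. by rewrite /= modnDmr addnBA // ltnW. Qed.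

Lemma val_oppZp1 m : val (-1 : 'I_m.+2) = m.+1.
Proof. by rewrite /= modn_small. Qed.

(* Here [j - i] is the difference in Z/(m+1), coerced back to nat. *)
Lemma circE (R : nzRingType) m (c : nat -> R) (i j : 'I_m.+1) : circ m.+1 c i j = c (j - i).
Proof. by rewrite mxE val_subZp. Qed.

Lemma eq_circ (R : nzRingType) m (f g : nat -> R) : f =1 g -> circ m f = circ m g.
Proof. by move=> fg; apply/matrixP => i j; rewrite !mxE fg. Qed.

Definition shift_perm k : 'S_k.+2 := perm (addIr 1).

Section CyclicShift.
Variables (R : nzRingType) (k : nat).
Local Notation P := (perm_mx (shift_perm k) : 'M[R]_k.+2).

Lemma mul_shift_mx p (Y : 'M[R]_(k.+2, p)) : P *m Y = \matrix_(i, j) Y (i + 1) j.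
Proof. by rewrite -row_permE; apply/matrixP => i j; rewrite !mxE permE. Qed.

Lemma mul_tr_shift_mx p (Y : 'M[R]_(k.+2, p)) : P^T *m Y = \matrix_(i, j) Y (i - 1) j.
Proof.
rewrite tr_perm_mx -row_permE; apply/matrixP => i j; rewrite !mxE.
by rewrite -{1}[i](subrK 1) -[_ + 1](permE (addIr 1)) permK.
Qed.

Lemma mul_shift_mx_const p : P *m const_mx 1 = const_mx 1 :> 'M_(k.+2, p).
Proof. by rewrite -row_permE row_perm_const. Qed.

Lemma mul_tr_shift_mx_const p : P^T *m const_mx 1 = const_mx 1 :> 'M_(k.+2, p).
Proof. by rewrite tr_perm_mx -row_permE row_perm_const. Qed.

Lemma mul_const_shift_mx p : const_mx 1 *m P = const_mx 1 :> 'M_(p, k.+2).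
Proof. by rewrite -[shift_perm k]invgK -col_permE; apply/matrixP => i j; rewrite !mxE. Qed.

Lemma mul_const_tr_shift_mx p : const_mx 1 *m P^T = const_mx 1 :> 'M_(p, k.+2).
Proof. by rewrite tr_perm_mx -col_permE; apply/matrixP => i j; rewrite !mxE. Qed.

Lemma mul_tr_shift_mx_shift : P^T *m P = 1%:M.
Proof. by rewrite tr_perm_mx -perm_mxM mulVg perm_mx1. Qed.

Lemma circ_shiftE (a b c : R) :
  circ k.+2 (fun d => a *+ (d == 0)%N + b *+ (d == 1)%N + c *+ (d == k.+1)%N)
  = a%:M + b *: P + c *: P^T.
Proof.
apply/matrixP => i j; rewrite circE !mxE !permE (eq_addr_subr i j) (eq_addr_subrN i j).
rewrite (eq_sym i j) -(subr_eq0 j i).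
by case: (j - i) => d lt_dk; rewrite -!val_eqE val_oppZp1 /= !mulr_natr.
Qed.

End CyclicShift.

Section WheelMatrices.
Variables (R : comNzRingType) (k : nat).
Local Notation n := k.+4.
Local Notation P := (perm_mx (shift_perm k.+1) : 'M[R]_k.+3).
Local Notation B := (wheel_B R n).
Local Notation C := (wheel_C R n).

Lemma wheel_BE : B = 3%:M - P - P^T.
Proof.
rewrite /wheel_B (@eq_circ _ _ _
  (fun d => 3 *+ (d == 0)%N + (-1) *+ (d == 1)%N + (-1) *+ (d == k.+2)%N)).
  by rewrite circ_shiftE !scaleN1r.
by case=> [|[|d]] /=; rewrite ?addr0 ?add0r //; case: (_ == _).
Qed.

Lemma wheel_CE : C = 1%:M - P^T.
Proof.
rewrite /wheel_C (@eq_circ _ _ _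
  (fun d => 1 *+ (d == 0)%N + 0 *+ (d == 1)%N + (-1) *+ (d == k.+2)%N)).
  by rewrite circ_shiftE scale0r addr0 scaleN1r.
by case=> [|[|d]] /=; rewrite ?addr0 ?add0r //; case: (_ == _).
Qed.

Lemma wheel_CCt : C *m C^T + 1%:M = B.
Proof.
rewrite wheel_CE wheel_BE linearB /= trmx1 trmxK mulmxBl !mulmxBr !mul1mx !mulmx1.
by rewrite mul_tr_shift_mx_shift; apply/matrixP => i j; rewrite !mxE; ring.
Qed.

Lemma mul_wheel_B_const p : B *m const_mx 1 = const_mx 1 :> 'M_(k.+3, p).
Proof.
rewrite wheel_BE !mulmxBl mul_scalar_mx mul_shift_mx_const mul_tr_shift_mx_const.
by apply/matrixP => i j; rewrite !mxE; ring.
Qed.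

Lemma mul_const_wheel_B p : const_mx 1 *m B = const_mx 1 :> 'M_(p, k.+3).
Proof.
rewrite wheel_BE !mulmxBr mul_mx_scalar mul_const_shift_mx mul_const_tr_shift_mx.
by apply/matrixP => i j; rewrite !mxE; ring.
Qed.

Lemma mul_wheel_B_circ (c : nat -> R) i j :
  (B *m circ k.+3 c) i j = 3 * c (j - i) - c (j - i - 1) - c (j - i + 1).
Proof.
rewrite wheel_BE !mulmxBl mul_scalar_mx mul_shift_mx mul_tr_shift_mx !mxE -!val_subZp.
have -> : j - (i + 1) = j - i - 1 by rewrite opprD addrA.
by have -> : j - (i - 1) = j - i + 1 by rewrite opprB addrA (addrAC j).
Qed.

Lemma wheel_adjE : wheel_adj R n = block_mx 0 (const_mx 1) (const_mx 1) (P + P^T).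
Proof.
have -> : P + P^T = circ k.+3
    (fun d => 0 *+ (d == 0)%N + 1 *+ (d == 1)%N + 1 *+ (d == k.+2)%N).
  by rewrite circ_shiftE !scale1r -scalemx1 scale0r add0r.
apply/matrixP => i j; rewrite -(splitK i) -(splitK j).
case: (split i) => i'; case: (split j) => j';
  rewrite ?block_mxEul ?block_mxEur ?block_mxEdl ?block_mxEdr !mxE ?(ord1 i') ?(ord1 j') //=.
rewrite /wheel_edge /= addSn subSS mul0rn add0r.
case: eqP => [->|_] /=; first by rewrite addr0.
by case: (_ == _); rewrite ?add0r.
Qed.

Lemma mul_wheel_adj_const :
  wheel_adj R n *m (const_mx 1 : 'cV_(1 + k.+3)) = col_mx (const_mx k.+3%:R) (const_mx 3).
Proof.
rewrite wheel_adjE -(col_mx_const 1 k.+3) mul_block_col mul0mx add0r mulmxDl.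
rewrite mul_shift_mx_const mul_tr_shift_mx_const !mul_const1_mx.
by congr col_mx; apply/matrixP => i j; rewrite !mxE /= ?mulr1 //; ring.
Qed.

Lemma wheel_laplacianE :
  laplacian (wheel_adj R n) = block_mx k.+3%:R%:M (- const_mx 1) (- const_mx 1) B.
Proof.
rewrite laplacianE mul_wheel_adj_const tr_col_mx !trmx_const diag_mx_row !diag_const_mx.
rewrite wheel_adjE opp_block_mx add_block_mx wheel_BE !oppr0 !addr0 !add0r.
by rewrite opprD addrA.
Qed.

End WheelMatrices.

Section BinetSequence.
Variables (R : comNzRingType) (phi psi a b c : R) (M : nat).
Hypotheses (phi_psiD : phi + psi = 3) (phi_psiM : phi * psi = 1).
Hypotheses (a_def : a * (1 - phi ^+ M) = c) (b_def : b * (1 - psi ^+ M) = - c).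

Definition binet j := a * phi ^+ j + b * psi ^+ j.

Lemma binet_rec j : 3 * binet j.+1 - binet j - binet j.+2 = 0.
Proof.
have phi_root : 3 * phi - 1 - phi ^+ 2 = 0 by rewrite -phi_psiD -phi_psiM; ring.
have psi_root : 3 * psi - 1 - psi ^+ 2 = 0 by rewrite -phi_psiD -phi_psiM; ring.
transitivity (a * phi ^+ j * (3 * phi - 1 - phi ^+ 2)
              + b * psi ^+ j * (3 * psi - 1 - psi ^+ 2)).
  by rewrite /binet !exprS; ring.
by rewrite phi_root psi_root !mulr0 addr0.
Qed.

Lemma binet_wrap : binet M = binet 0.
Proof.
have aM : a * phi ^+ M = a - c by rewrite -a_def; ring.
have bM : b * psi ^+ M = b + c by rewrite -[c]opprK -b_def; ring.
by rewrite /binet aM bM !expr0 !mulr1; ring.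
Qed.

Lemma binet_mod j : (j <= M)%N -> binet (j %% M) = binet j.
Proof.
by rewrite leq_eqVlt => /orP[/eqP ->|/modn_small -> //]; rewrite modnn binet_wrap.
Qed.

Lemma binet_first : (0 < M)%N -> 3 * binet 0 - binet M.-1 - binet 1 = c * (psi - phi).
Proof.
case: M a_def b_def => // m aM bM _ /=.
have aE : a * phi ^+ m = (a - c) * psi.
  by rewrite -[LHS]mulr1 -phi_psiM -aM exprS; ring.
have bE : b * psi ^+ m = (b + c) * phi.
  by rewrite -[LHS]mulr1 -phi_psiM -[c]opprK -bM exprS; ring.
rewrite /binet aE bE !expr0 !expr1 !mulr1.
transitivity (c * (psi - phi) + (a + b) * (3 - phi - psi)); first ring.
by rewrite -addrA -opprD phi_psiD subrr mulr0 addr0.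
Qed.

End BinetSequence.

Lemma scaled_geom_ratio (F : fieldType) (x r : F) (M j : nat) :
  (j <= M)%N -> x != 0 -> 1 - r ^+ M != 0 ->
  x ^+ (M - j) * ((x * r) ^+ j / (x ^+ M - (x * r) ^+ M)) = r ^+ j / (1 - r ^+ M).
Proof.
move=> le_jM x_neq0 rM_neq1.
have xM : x ^+ M = x ^+ (M - j) * x ^+ j by rewrite -exprD subnK.
rewrite !exprMn xM -{1}[_ * x ^+ j]mulr1 -mulrBr.
by field; rewrite rM_neq1 !expf_neq0.
Qed.

Section WheelSequence.
Variables (R : realType) (k : nat).
Local Notation n := k.+4.
Local Notation M := k.+3.

Let s : R := Num.sqrt 5.
Let phi := (3 + s) / 2.
Let psi := (3 - s) / 2.
Let c := n%:R / s.
Let a := c / (1 - phi ^+ M).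
Let b := - c / (1 - psi ^+ M).

Let s_sqr : s ^+ 2 = 5.
Proof. by rewrite sqr_sqrtr ?ler0n. Qed.

Let s_gt1 : 1 < s.
Proof. have := sqrtr_ge0 (5 : R); have := s_sqr; rewrite -/s; nra. Qed.

Let s_lt3 : s < 3.
Proof. have := sqrtr_ge0 (5 : R); have := s_sqr; rewrite -/s; nra. Qed.

Let s_neq0 : s != 0.
Proof. by rewrite gt_eqF // (lt_trans ltr01). Qed.

Let phiM_neq1 : 1 - phi ^+ M != 0.
Proof. by rewrite subr_eq0 lt_eqF // exprn_egt1 // /phi; move: s_gt1; lra. Qed.

Let psiM_neq1 : 1 - psi ^+ M != 0.
Proof. by rewrite subr_eq0 gt_eqF // exprn_ilt1 // /psi; move: s_gt1 s_lt3; lra. Qed.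

Let phi_psiD : phi + psi = 3.
Proof. by rewrite /phi /psi; field. Qed.

Let phi_psiM : phi * psi = 1.
Proof. by rewrite /phi /psi; field: s_sqr. Qed.

Let a_def : a * (1 - phi ^+ M) = c.
Proof. by rewrite /a divfK. Qed.

Let b_def : b * (1 - psi ^+ M) = - c.
Proof. by rewrite /b divfK. Qed.

Lemma wheel_b_binet j : (j <= M)%N -> wheel_b R n j = 1 + binet phi psi a b j.
Proof.
move=> le_jM; rewrite /wheel_b -/s.
have two_phi : 3 + s = 2 * phi by rewrite /phi; field.
have two_psi : 3 - s = 2 * psi by rewrite /psi; field.
change (n - 1)%N with M; rewrite two_phi two_psi.
rewrite [_ * 2 ^+ _ / s]mulrAC -[_ / s * _ * _]mulrA mulrBr.
rewrite !(scaled_geom_ratio le_jM) ?pnatr_eq0 //.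
by rewrite /binet /a /b /c; ring.
Qed.

Lemma wheel_b_cyclic_rec (d : 'I_M) :
  3 * wheel_b R n d - wheel_b R n (d - 1)%R - wheel_b R n (d + 1)%R = 1 - n%:R *+ (d == 0).
Proof.
have val_succ : val (d + 1) = (d.+1 %% M)%N by rewrite /= modnDmr addn1.
rewrite !wheel_b_binet ?(ltnW (ltn_ord _)) // val_succ (binet_mod a_def b_def) //.
have -> : forall x y z : R, 3 * (1 + x) - (1 + y) - (1 + z) = 1 + (3 * x - y - z).
  by move=> x y z; ring.
congr (1 + _); rewrite val_subZp; clear val_succ.
case: d => [[|d] lt_dM] /=; rewrite (@modn_small 1) //.
  rewrite add0n subn1 modn_small // (binet_first phi_psiD phi_psiM a_def b_def) //.
  by rewrite /c /phi /psi; field.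
rewrite addSn subn1 modnDr modn_small ?(ltn_trans _ lt_dM) //.
by rewrite (binet_rec _ _ phi_psiD phi_psiM) oppr0.
Qed.

End WheelSequence.

Section WheelInverse.
Variables (R : realType) (k : nat).
Local Notation n := k.+4.
Local Notation B := (wheel_B R n).

Lemma mul_wheel_B_circ_b : B *m circ k.+3 (wheel_b R n) = const_mx 1 - n%:R%:M.
Proof.
apply/matrixP => i j; rewrite mul_wheel_B_circ wheel_b_cyclic_rec !mxE.
by rewrite (eq_sym i j) -(subr_eq0 j i).
Qed.

Lemma wheel_B_unit : B \in unitmx.
Proof.
suff /mulmx1_unit[] :
  B *m (circ k.+3 (wheel_b R n) *m (- n%:R^-1 *: (1%:M + const_mx 1))) = 1%:M by [].
rewrite mulmxA mul_wheel_B_circ_b -scalemxAr mulmxDr mulmx1 mulmxBl mul_const1_mx.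
rewrite mul_scalar_mx; apply/matrixP => i j; rewrite !mxE.
by case: (i == j); rewrite /= ?mulr1n ?mulr0n; field; rewrite -natrD pnatr_eq0.
Qed.

Lemma wheel_XE : wheel_X R n = circ k.+3 (wheel_b R n).
Proof. by rewrite /wheel_X wheel_CCt -mul_wheel_B_circ_b mulKmx // wheel_B_unit. Qed.

Lemma mul_wheel_B_X : B *m wheel_X R n = const_mx 1 - n%:R%:M.
Proof. by rewrite wheel_XE mul_wheel_B_circ_b. Qed.

Lemma mul_wheel_X_B : wheel_X R n *m B = const_mx 1 - n%:R%:M.
Proof.
have commB : (const_mx 1 - n%:R%:M) *m B = B *m (const_mx 1 - n%:R%:M).
  by rewrite mulmxBl mulmxBr mul_const_wheel_B mul_wheel_B_const scalar_mxC.
by rewrite /wheel_X wheel_CCt -mulmxA commB mulKmx // wheel_B_unit.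
Qed.

End WheelInverse.

Definition bordered (R : nzRingType) m (a : R) (D : 'M[R]_m) : 'M[R]_(1 + m) :=
  block_mx a%:M (- const_mx 1) (- const_mx 1) D.

Section BorderedInverse.
Variables (F : fieldType) (m : nat) (B X : 'M[F]_m).
Local Notation n := m.+1.
Hypothesis n_neq0 : n%:R != 0 :> F.
Hypotheses (mulB1 : forall p, B *m const_mx 1 = const_mx 1 :> 'M_(m, p))
           (mul1B : forall p, const_mx 1 *m B = const_mx 1 :> 'M_(p, m)).
Hypotheses (mulBX : B *m X = const_mx 1 - n%:R%:M) (mulXB : X *m B = const_mx 1 - n%:R%:M).

Let mulX1 p : X *m const_mx 1 = - const_mx 1 :> 'M_(m, p).
Proof.
rewrite -[const_mx 1 in LHS]mulB1 mulmxA mulXB mulmxBl mul_const1_mx mul_scalar_mx.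
by apply/matrixP => i j; rewrite !mxE; ring.
Qed.

Let mul1X p : const_mx 1 *m X = - const_mx 1 :> 'M_(p, m).
Proof.
rewrite -[const_mx 1 in LHS]mul1B -mulmxA mulBX mulmxBr mul_const1_mx mul_mx_scalar.
by apply/matrixP => i j; rewrite !mxE; ring.
Qed.

Let L := bordered m%:R B.
Let Lq := bordered m%:R (- const_mx 1 - n%:R *: X).
(* Q is n I - J on the whole space, n times the projector onto the complement of 1. *)
Let Q := bordered m%:R (n%:R%:M - const_mx 1 : 'M[F]_m).

Local Ltac block_simpl := rewrite /L /Lq /Q /bordered mulmx_block scale_block_mx;
  congr block_mx; rewrite ?(mulmxDl, mulmxDr, mulmxBl, mulmxBr, mulNmx, mulmxN,
    mul_scalar_mx, mul_mx_scalar, mul_const1_mx, mulB1, mul1B);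
  rewrite -?scalemxAl -?scalemxAr ?(mulBX, mulXB, mulX1, mul1X);
  apply/matrixP; let i := fresh "i" in let j := fresh "j" in intros i j;
  rewrite !mxE; try rewrite (ord1 i) (ord1 j) eqxx /=;
  try case: (i == j); rewrite /= ?mulr1n ?mulr0n; ring.

Let mul_L_Lq : L *m Lq = n%:R *: Q. Proof. block_simpl. Qed.
Let mul_Lq_L : Lq *m L = n%:R *: Q. Proof. block_simpl. Qed.
Let mul_Q_L : Q *m L = n%:R *: L. Proof. block_simpl. Qed.
Let mul_Q_Lq : Q *m Lq = n%:R *: Lq. Proof. block_simpl. Qed.

Let tr_Q : Q^T = Q.
Proof.
rewrite /Q /bordered tr_block_mx tr_scalar_mx.
by congr block_mx; apply/matrixP => i j; rewrite !mxE // eq_sym.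
Qed.

Lemma bordered_MP_inverse :
  is_MP_inverse (bordered m%:R B)
    ((n%:R ^+ 2)^-1 *: bordered m%:R (- const_mx 1 - n%:R *: X)).
Proof.
have n2 : (n%:R ^+ 2)^-1 * n%:R = n%:R^-1 :> F.
  by rewrite expr2 invfM -mulrA mulVf ?mulr1.
apply: (@is_MP_inverse_projector _ _ _ _ (n%:R^-1 *: Q)); rewrite -/L -/Lq.
- by rewrite -scalemxAr mul_L_Lq scalerA n2.
- by rewrite -scalemxAl mul_Lq_L scalerA n2.
- by rewrite linearZ /= tr_Q.
- by rewrite -scalemxAl mul_Q_L scalerA mulVf ?scale1r.
- by rewrite -scalemxAl -scalemxAr mul_Q_Lq !scalerA mulrAC mulVf ?mul1r.
Qed.

End BorderedInverse.

Theorem mainTheorem10 (R : realType) (n : nat) (hn : (4 <= n)%N) :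
  let L := laplacian (wheel_adj R n) in
  [/\ L = block_mx ((n.-1)%:R%:M) (- const_mx 1) (- const_mx 1) (wheel_B R n),
      wheel_C R n *m (wheel_C R n)^T + 1%:M \in unitmx,
      wheel_X R n = circ (n.-1) (wheel_b R n)
    & is_MP_inverse L (wheel_Lplus R n)].
Proof.
case: n hn => [|[|[|[|k]]]] // _ L.
split.
- exact: wheel_laplacianE.
- by rewrite wheel_CCt wheel_B_unit.
- exact: wheel_XE.
rewrite /L wheel_laplacianE.
apply: bordered_MP_inverse; rewrite ?pnatr_eq0 //.
- exact: mul_wheel_B_const.
- exact: mul_const_wheel_B.
- exact: mul_wheel_B_X.
- exact: mul_wheel_X_B.
Qed.
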